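(* Let $G$ be a finite connected graph with node set $V$, let $U\subseteq V$, and let $S_U$ be the set of nodes $v$ for which no $x\in U$ satisfies $e(v)=d(v,x)+e(x)$. Then any node $v\in S_U$ with $e(v)=\min_{u\in S_U}e(u)$ is its own unique tight upper certificate: the only node $x\in V$ with $e(v)=d(v,x)+e(x)$ is $x=v$.
   Context: $d$ is the shortest-path distance and $e(u)=\max_{w\in V}d(u,w)$. A node $x$ is a tight upper certificate for $v$ if $e(v)=d(v,x)+e(x)$. *)

From mathcomp Require Import all_boot.
Set Implicit Arguments. Unset Strict Implicit. Unset Printing Implicit Defensive.

Section Graph.
Variables (T : finType) (g : rel T).

Fixpoint walkn (n : nat) (u w : T) : bool :=
  match n with
  | 0 => u == w
  | n'.+1 => [exists y, g u y && walkn n' y w]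
  end.

(* Any shortest walk has length < #|T|, so searching
   0..#|T|-1 suffices; for unreachable pairs the value is #|T| (irrelevant,
   graphs in the theorem are connected). *)
Definition dist (u w : T) : nat := find (fun n => walkn n u w) (iota 0 #|T|).

Definition ecc (u : T) : nat := \max_(w : T) dist u w.

Definition tight_cert (v x : T) : Prop := ecc v = dist v x + ecc x.

Definition S_set (U : {set T}) : {set T} :=
  [set v | [forall x in U, ecc v != dist v x + ecc x]].

End Graph.

(* Tight certificates compose: if e(v) = d(v,x) + e(x) and e(x) = d(x,y) + e(y),
   then d(v,y) + e(y) <= d(v,x) + d(x,y) + e(y) = e(v), and the reverse
   inequality always holds, so y certifies v.  Now let v be an
   eccentricity-minimal node of S_U and x <> v certify v.  Then e(x) < e(v), so
   x lies outside S_U and has a certificate y in U; composing, y certifies v,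
   contradicting v in S_U.  Only the triangle inequality and d(v,x) = 0 <-> x = v
   are used. *)
From mathcomp Require Import all_boot.

Set Implicit Arguments.
Unset Strict Implicit.
Unset Printing Implicit Defensive.

Section Distance.
Variables (T : finType) (g : rel T).

Lemma dist_le_card u w : dist g u w <= #|T|.
Proof. by rewrite /dist -{2}(size_iota 0 #|T|) find_size. Qed.

Lemma walkn_dist u w : dist g u w < #|T| -> walkn g (dist g u w) u w.
Proof.
move=> dist_lt; have := dist_lt; rewrite -{1}(size_iota 0 #|T|) -has_find.
by move=> /(nth_find 0); rewrite nth_iota.
Qed.

Lemma dist_le_walkn n u w : walkn g n u w -> dist g u w <= n.
Proof.
move=> walk_n; have [n_lt|] := ltnP n #|T|; last exact: leq_trans (dist_le_card u w).
rewrite leqNgt; apply/negP => /(before_find 0).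
by rewrite nth_iota // walk_n.
Qed.

Lemma walkn_cat a b u x w :
  walkn g a u x -> walkn g b x w -> walkn g (a + b) u w.
Proof.
elim: a u => [|a IHa] u /=; first by move/eqP->.
case/existsP=> y /andP[g_uy walk_yx] walk_xw.
by apply/existsP; exists y; rewrite g_uy (IHa _ walk_yx walk_xw).
Qed.

Lemma dist_triangle u x w : dist g u w <= dist g u x + dist g x w.
Proof.
have [ux_lt|ux_ge] := ltnP (dist g u x) #|T|; last first.
  by rewrite (leq_trans (dist_le_card _ _)) // (leq_trans ux_ge) ?leq_addr.
have [xw_lt|xw_ge] := ltnP (dist g x w) #|T|; last first.
  by rewrite (leq_trans (dist_le_card _ _)) // (leq_trans xw_ge) ?leq_addl.
exact: dist_le_walkn (walkn_cat (walkn_dist ux_lt) (walkn_dist xw_lt)).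
Qed.

Lemma dist_xx v : dist g v v = 0.
Proof. by apply/eqP; rewrite -leqn0 (@dist_le_walkn 0) /=. Qed.

Lemma dist_eq0 v x : dist g v x = 0 -> x = v.
Proof.
move=> dist0; have card_gt0 : 0 < #|T| by apply/card_gt0P; exists v.
by have := @walkn_dist v x; rewrite dist0 => /(_ card_gt0) /eqP.
Qed.

Lemma dist_le_ecc v w : dist g v w <= ecc g v.
Proof. exact: (@leq_bigmax_cond _ predT (dist g v)). Qed.

Lemma ecc_le_dist_ecc v y : ecc g v <= dist g v y + ecc g y.
Proof.
apply/bigmax_leqP => w _; apply: leq_trans (dist_triangle v y w) _.
by rewrite leq_add2l dist_le_ecc.
Qed.

Lemma tight_cert_refl v : tight_cert g v v.
Proof. by rewrite /tight_cert dist_xx. Qed.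

Lemma tight_cert_trans v x y :
  tight_cert g v x -> tight_cert g x y -> tight_cert g v y.
Proof.
rewrite /tight_cert => ecc_vx ecc_xy; apply/eqP.
rewrite eqn_leq ecc_le_dist_ecc {1}ecc_vx ecc_xy addnA leq_add2r.
exact: dist_triangle.
Qed.

Lemma tight_cert_ecc_lt v x : tight_cert g v x -> x != v -> ecc g x < ecc g v.
Proof.
rewrite /tight_cert => ->; have [/dist_eq0 ->|dist_gt0 _] := posnP (dist g v x).
  by rewrite eqxx.
by rewrite -addn1 addnC leq_add2r.
Qed.

Lemma S_setP (U : {set T}) v :
  reflect (forall x, x \in U -> ~ tight_cert g v x) (v \in S_set g U).
Proof.
rewrite inE; apply: (iffP forall_inP) => [no_cert x /no_cert /eqP //|no_cert x].
by move/no_cert/eqP.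
Qed.

Lemma S_setPn (U : {set T}) v :
  reflect (exists2 x, x \in U & tight_cert g v x) (v \notin S_set g U).
Proof.
rewrite inE negb_forall_in; apply: (iffP exists_inP) => -[x xU].
  by move/negbNE/eqP; exists x.
by move=> cert; exists x; rewrite // negbK; apply/eqP.
Qed.

End Distance.

Theorem lemma1 (T : finType) (g : rel T)
  (gsym : symmetric g) (girr : irreflexive g)
  (gconn : forall u w : T, connect g u w)
  (U : {set T}) (v : T)
  (vS : v \in S_set g U)
  (vmin : forall u, u \in S_set g U -> ecc g v <= ecc g u) :
  tight_cert g v v /\ (forall x : T, tight_cert g v x -> x = v).
Proof.
split=> [|x cert_vx]; first exact: tight_cert_refl.
have [//|x_neq_v] := eqVneq x v.
have ecc_lt := tight_cert_ecc_lt cert_vx x_neq_v.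
have xNS : x \notin S_set g U by apply: contraL ecc_lt => /vmin; rewrite leqNgt.
have [y yU cert_xy] := S_setPn g U x xNS.
by case: (S_setP g U v vS y yU); apply: tight_cert_trans cert_xy.
Qed.
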